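(* Let $G=(V,E)$ be an undirected weighted graph in which shortest paths are unique. Let $u,v\in V$, let $D\subseteq E$ be a set of $d$ edges such that $u$ and $v$ are connected in $G-D$, and let $r=\mathrm{rank}_{G-D}(u,v)$. Suppose $w$ is a vertex on $\pi_{G-D}(u,v)$ such that both $\pi(u,w)$ and $\pi(w,v)$ contain an edge of $D$. Then $\mathrm{rank}_{G-D}(u,w)\le r-1$ and $\mathrm{rank}_{G-D}(w,v)\le r-1$.
   Context: For $D\subseteq E$, $G-D$ is $G$ with the edges of $D$ removed. For a graph $H$ and vertices $a,b$, $\pi_H(a,b)$ denotes the (unique) shortest path from $a$ to $b$ in $H$, regarded as a directed path from $a$ to $b$; $\pi(a,b)=\pi_G(a,b)$. A path is $k$-decomposable if it is the concatenation of at most $k+1$ shortest paths in $G$, interleaved with at most $k$ edges. $\mathrm{rank}_{G-D}(a,b)$ is the smallest integer $i\ge 0$ such that $\pi_{G-D}(a,b)$ is an $i$-decomposable path. *)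

From HB Require Import structures.
From mathcomp Require Import all_boot all_order all_algebra.
Set Implicit Arguments. Unset Strict Implicit. Unset Printing Implicit Defensive.
Import Order.TTheory GRing.Theory Num.Theory.
Local Open Scope ring_scope.

(* A path (or walk) is represented
   by its non-empty vertex sequence [x :: p]. *)

Section Graph.
Variables (V : finType) (R : realDomainType).

Definition undirected_weighted_graph (adj : rel V) (wt : V -> V -> R) : Prop :=
  [/\ symmetric adj, irreflexive adj,
      (forall x y, wt x y = wt y x) &
      (forall x y, adj x y -> 0 < wt x y)].

Definition in_D (D : {set V * V}) (x y : V) : bool := ((x, y) \in D) || ((y, x) \in D).

Definition adj_minus (adj : rel V) (D : {set V * V}) : rel V :=
  fun x y => adj x y && ~~ in_D D x y.

Definition edge_set (adj : rel V) (D : {set V * V}) : Prop :=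
  forall e, e \in D -> adj e.1 e.2.

Fixpoint pweight (wt : V -> V -> R) (x : V) (p : seq V) : R :=
  if p is y :: q then wt x y + pweight wt y q else 0.

Definition is_sp (e : rel V) (wt : V -> V -> R) (a b : V) (s : seq V) : Prop :=
  exists p, [/\ s = a :: p, path e a p, last a p = b &
    forall q, path e a q -> last a q = b -> pweight wt a p <= pweight wt a q].

Definition edges_of (s : seq V) : seq (V * V) := zip s (behead s).

Definition contains_D_edge (D : {set V * V}) (s : seq V) : Prop :=
  has (fun e => in_D D e.1 e.2) (edges_of s).

(* [dec adj wt s n]: s is the concatenation of n+1 shortest paths of G,
   where consecutive pieces are either glued at a common vertex or joined by
   an edge of G (hence at most n edges are interleaved). *)
Inductive dec (adj : rel V) (wt : V -> V -> R) : seq V -> nat -> Prop :=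
| dec_one a b Q : is_sp adj wt a b Q -> dec adj wt Q 0
| dec_glue a b Q S n : is_sp adj wt a b Q -> dec adj wt S n ->
    head b S = b -> dec adj wt (Q ++ behead S) n.+1
| dec_edge a b Q S n : is_sp adj wt a b Q -> dec adj wt S n ->
    S <> [::] -> adj b (head b S) -> dec adj wt (Q ++ S) n.+1.

Definition decomposable (adj : rel V) (wt : V -> V -> R) (s : seq V) (k : nat) : Prop :=
  exists2 n, (n <= k)%N & dec adj wt s n.

Definition is_rank (adj : rel V) (wt : V -> V -> R) (s : seq V) (r : nat) : Prop :=
  decomposable adj wt s r /\ forall i, decomposable adj wt s i -> (r <= i)%N.

Definition unique_shortest_paths (adj : rel V) (wt : V -> V -> R) : Prop :=
  forall (D : {set V * V}) a b s1 s2,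
    is_sp (adj_minus adj D) wt a b s1 -> is_sp (adj_minus adj D) wt a b s2 -> s1 = s2.

End Graph.

From HB Require Import structures.
From mathcomp Require Import all_boot all_order all_algebra.
From mathcomp Require Import zify.
From Stdlib Require Import Classical_Prop.
Import Order.TTheory GRing.Theory Num.Theory.
Local Open Scope ring_scope.

(* A decomposition of pi_{G-D}(u,v) into n+1 <= r+1 pieces splits at w into
   decompositions of the two halves using j and n-j junctions.  Neither half
   is 0-decomposable: it would then be a shortest path of G, hence by
   uniqueness equal to pi(u,w) (resp. pi(w,v)), which uses an edge of D,
   whereas a path of G - D does not.  So 0 < j < n <= r. *)

Section ShortestPaths.
Local Set Implicit Arguments.
Local Unset Strict Implicit.

Lemma cat_eq_cat_cons (T : Type) (s1 s2 t1 t2 : seq T) (x : T) :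
  s1 ++ s2 = t1 ++ x :: t2 ->
  (exists t, s1 = t1 ++ x :: t /\ t2 = t ++ s2) \/
  (exists t, t1 = s1 ++ t /\ s2 = t ++ x :: t2).
Proof.
elim: s1 t1 => [|y s1 IH] t1 /=; first by move=> ->; right; exists t1.
case: t1 => [|z t1] /= [-> E]; first by left; exists s1; rewrite E.
by case: (IH t1 E) => [[t [-> ->]]|[t [-> ->]]]; [left | right]; exists t.
Qed.

Variables (V : finType) (R : realDomainType).
Implicit Types (adj e : rel V) (wt : V -> V -> R) (D : {set V * V}).

Lemma pweight_cat wt x p q :
  pweight wt x (p ++ q) = pweight wt x p + pweight wt (last x p) q.
Proof. by elim: p x => [|y p IH] x /=; rewrite ?add0r // IH addrA. Qed.

Lemma is_sp_endpoints e e' wt wt' a b a' b' s :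
  is_sp e wt a b s -> is_sp e' wt' a' b' s -> a = a' /\ b = b'.
Proof. by case=> p [-> _ <- _]; case=> p' [[<- <-] _ <- _]. Qed.

Lemma eq_is_sp e e' wt a b s :
  e =2 e' -> is_sp e wt a b s -> is_sp e' wt a b s.
Proof.
move=> ee' [p [-> ep lastp opt]]; exists p; split => //; first by rewrite -(eq_path ee').
by move=> q; rewrite -(eq_path ee'); apply: opt.
Qed.

(* Exchanging either part for a cheaper path with the same ends would give a
   cheaper path from a to b. *)
Lemma is_sp_cat e wt a b p1 p2 :
  is_sp e wt a b (a :: p1 ++ p2) ->
  is_sp e wt a (last a p1) (a :: p1) /\ is_sp e wt (last a p1) b (last a p1 :: p2).
Proof.
case=> p [[<-]]; rewrite cat_path last_cat => /andP[ep1 ep2] lastp opt.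
split.
- exists p1; split => // q eq lastq.
  have := opt (q ++ p2); rewrite cat_path eq lastq ep2 last_cat lastq.
  by rewrite !pweight_cat lastq lerD2r; apply.
- exists p2; split => // q eq lastq.
  have := opt (p1 ++ q); rewrite cat_path eq ep1 last_cat lastq.
  by rewrite !pweight_cat lerD2l; apply.
Qed.

Lemma is_sp_split e wt a b s1 c s2 :
  is_sp e wt a b (s1 ++ c :: s2) ->
  is_sp e wt a c (rcons s1 c) /\ is_sp e wt c b (c :: s2).
Proof.
have headE a' s : is_sp e wt a b (a' :: s) -> a' = a by case=> p [[->]].
case: s1 => [|a' s1] /= sp; have Ea := headE _ _ sp; subst.
  exact: (@is_sp_cat e wt a b [::]).
by have := @is_sp_cat e wt a b (rcons s1 c) s2; rewrite cat_rcons last_rcons; apply.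
Qed.

Lemma adj_minus0 adj : adj_minus adj set0 =2 adj.
Proof. by move=> x y; rewrite /adj_minus /in_D !in_set0 andbT. Qed.

Lemma unique_sp_graph adj wt a b s1 s2 :
  unique_shortest_paths adj wt ->
  is_sp adj wt a b s1 -> is_sp adj wt a b s2 -> s1 = s2.
Proof.
move=> uniq sp1 sp2; have e0 x y := esym (adj_minus0 adj x y).
exact: (uniq set0 _ _ _ _ (eq_is_sp e0 sp1) (eq_is_sp e0 sp2)).
Qed.

Lemma path_adj_minus_noD adj D a p :
  path (adj_minus adj D) a p -> ~ contains_D_edge D (a :: p).
Proof.
move=> ep; apply/negP; elim: p a ep => [|y p IH] a //= /andP[/andP[_ notD] ep].
by rewrite /contains_D_edge /= negb_or notD IH.
Qed.

Lemma is_sp_adj_minus_noD adj D wt a b s :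
  is_sp (adj_minus adj D) wt a b s -> ~ contains_D_edge D s.
Proof. by case=> p [-> ep _ _]; apply: path_adj_minus_noD ep. Qed.

Lemma sp_minus_not_dec0 adj wt D a b s Q :
  unique_shortest_paths adj wt ->
  is_sp (adj_minus adj D) wt a b s -> is_sp adj wt a b Q -> contains_D_edge D Q ->
  ~ dec adj wt s 0.
Proof.
move=> uniq sps spQ DQ dec0; inversion dec0 as [a' b' s' sp' | |]; subst.
have [Ea Eb] := is_sp_endpoints sp' sps; subst a' b'.
by apply: (is_sp_adj_minus_noD sps); rewrite (unique_sp_graph uniq sp' spQ).
Qed.

Lemma dec_split adj wt s n s1 x s2 :
  dec adj wt s n -> s = s1 ++ x :: s2 ->
  exists2 j, (j <= n)%N & dec adj wt (rcons s1 x) j /\ dec adj wt (x :: s2) (n - j).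
Proof.
move=> dn; elim: dn s1 => {s n} [a b Q spQ | a b Q S n spQ dS IH headS | a b Q S n spQ dS IH S0 ab] s1.
- move=> EQ; rewrite EQ in spQ; have [sp1 sp2] := is_sp_split spQ.
  by exists 0%N => //; split; [apply: dec_one sp1 | apply: dec_one sp2].
- move=> E; case: (cat_eq_cat_cons E) => {E} [[t [EQ ->]] | [t [-> ES]]].
    rewrite EQ in spQ; have [sp1 sp2] := is_sp_split spQ.
    exists 0%N => //; split; first exact: dec_one sp1.
    by rewrite subn0 -cat_cons; apply: dec_glue sp2 dS headS.
  case: S dS ES headS IH => [|c S] dS /=; first by case: t.
  move=> ES Ec IH; subst c S; case: (IH (b :: t) erefl) => j jn [d1 d2].
  exists j.+1 => //; split => //.
  by rewrite rcons_cat -[rcons t x]/(behead (rcons (b :: t) x)); apply: dec_glue spQ d1 _.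
- move=> E; case: (cat_eq_cat_cons E) => {E} [[t [EQ ->]] | [t [-> ES]]].
    rewrite EQ in spQ; have [sp1 sp2] := is_sp_split spQ.
    exists 0%N => //; split; first exact: dec_one sp1.
    by rewrite subn0 -cat_cons; apply: dec_edge sp2 dS S0 ab.
  rewrite ES -cat_rcons headI /= in ab; case: (IH t ES) => j jn [d1 d2].
  exists j.+1 => //; split => //.
  by rewrite rcons_cat; apply: dec_edge spQ d1 _ _; rewrite headI.
Qed.

Lemma decomposable_rank adj wt s k :
  decomposable adj wt s k -> exists r, is_rank adj wt s r /\ (r <= k)%N.
Proof.
elim: k => [|k IH] dk; first by exists 0%N.
case: (classic (decomposable adj wt s k)) => [/IH[r [rk ?]] | notdk].
  by exists r; split; last exact: leqW.
exists k.+1; split => //; split => // i [m mi dm].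
by rewrite ltnNge; apply/negP => ik; apply: notdk; exists m; first exact: leq_trans mi ik.
Qed.

Lemma dec_rank_lt adj wt s j r :
  dec adj wt s j -> (j < r)%N -> exists r', is_rank adj wt s r' /\ (r' < r)%N.
Proof.
move=> dj jr; have [r' [rk r'j]] := decomposable_rank (ex_intro2 _ _ j (leqnn j) dj).
by exists r'; split; last exact: leq_ltn_trans jr.
Qed.

End ShortestPaths.

Theorem claim3p2 (V : finType) (R : realDomainType) (adj : rel V) (wt : V -> V -> R)
  (D : {set V * V}) (u v w : V) (P : seq V) (r : nat) :
  undirected_weighted_graph adj wt ->
  unique_shortest_paths adj wt ->
  edge_set adj D ->
  (* P = pi_{G-D}(u,v); its existence means u, v are connected in G - D *)
  is_sp (adj_minus adj D) wt u v P ->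
  is_rank adj wt P r ->
  w \in P ->
  (exists2 Q, is_sp adj wt u w Q & contains_D_edge D Q) ->
  (exists2 Q, is_sp adj wt w v Q & contains_D_edge D Q) ->
  (forall P1, is_sp (adj_minus adj D) wt u w P1 ->
     exists r1, is_rank adj wt P1 r1 /\ (r1 < r)%N) /\
  (forall P2, is_sp (adj_minus adj D) wt w v P2 ->
     exists r2, is_rank adj wt P2 r2 /\ (r2 < r)%N).
Proof.
move=> _ uniq _ spP [[n nr decP] _] wP [Q1 spQ1 DQ1] [Q2 spQ2 DQ2].
case/splitPr: wP spP decP => s1 s2 spP decP.
have [sp1 sp2] := is_sp_split spP.
have [j jn [dec1 dec2]] := dec_split decP erefl.
have j_gt0 : (0 < j)%N.
  by case: j dec1 {jn dec2} => // /(sp_minus_not_dec0 uniq sp1 spQ1 DQ1).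
have nj_gt0 : (0 < n - j)%N.
  by case: (n - j)%N dec2 => // /(sp_minus_not_dec0 uniq sp2 spQ2 DQ2).
split=> [P1 spP1 | P2 spP2].
- by rewrite (uniq D _ _ _ _ spP1 sp1); apply: dec_rank_lt dec1 _; lia.
- by rewrite (uniq D _ _ _ _ spP2 sp2); apply: dec_rank_lt dec2 _; lia.
Qed.
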